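(* For all positive integers $m,n$, the complete bipartite graph $K_{m,n}$ is not $(m+2)$-solvable.
   Context: An undirected graph is identified with the directed graph having both arcs $(u,v)$ and $(v,u)$ for each edge. $N^-(v)$ denotes the set of (in-)neighbours of $v$. For $q\ge2$ let $[q]=\{0,\dots,q-1\}$. A $D$-function over $[q]$ is a map $f=(f_v)_{v\in V}:[q]^V\to[q]^V$ with each $f_v(x)$ depending only on $(x_u)_{u\in N^-(v)}$. $D$ is $q$-solvable if some $D$-function $f$ over $[q]$ has the property that for every $x\in[q]^V$ there is $v$ with $f_v(x)=x_v$. *)

From mathcomp Require Import all_boot.
Set Implicit Arguments. Unset Strict Implicit. Unset Printing Implicit Defensive.

(* A digraph D on a finite vertex type V is given by its arc relation:
   [arc u v] means (u,v) is an arc, i.e. u \in N^-(v). *)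

Definition is_Dfunction (V : finType) (arc : rel V) (q : nat)
  (f : (V -> 'I_q) -> (V -> 'I_q)) : Prop :=
  forall (v : V) (x y : V -> 'I_q),
    (forall u, arc u v -> x u = y u) -> f x v = f y v.

Definition solvable (V : finType) (arc : rel V) (q : nat) : Prop :=
  exists f : (V -> 'I_q) -> (V -> 'I_q),
    is_Dfunction arc f /\ forall x : V -> 'I_q, exists v : V, f x v = x v.

Definition Kmn_arc (m n : nat) : rel ('I_m + 'I_n)%type :=
  fun u v => match u, v with
             | inl _, inr _ => true
             | inr _, inl _ => true
             | _, _ => false
             end.

From mathcomp Require Import all_boot.

(* Every coordinate of a left vertex a
   reads only the right values, and every right coordinate only the left
   values.  Consider the configurations [split_config c w]: all left vertices
   carry the same value c, the right vertices carry w.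
   1. For a right vertex b, the m+1 "constant" left inputs c = 0, ..., m
      produce at most m+1 < q values f_b, so some value w_b is never produced;
      this gives a right assignment w that no f_b ever reproduces.
   2. With w fixed, the m left coordinates f_a take m values independent of c,
      so one of the m+1 constants c = 0, ..., m differs from all of them.
   The configuration split_config c w then has no vertex v with f_v = x_v. *)

Lemma exists_image_notin (I T : finType) (h : I -> T) (s : seq T) :
  injective h -> size s < #|I| -> exists i, h i \notin s.
Proof.
move=> h_inj small_s; apply/existsP; rewrite -negb_forall.
apply: contraTN small_s => /forallP s_covers; rewrite -leqNgt.
rewrite -(card_codom h_inj); apply: leq_trans (card_size s).
by apply: subset_leq_card; apply/subsetP => _ /codomP [i ->].
Qed.

Definition split_config (m n q : nat) (c : 'I_q) (w : 'I_n -> 'I_q) :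
    ('I_m + 'I_n)%type -> 'I_q :=
  fun v => match v with inl _ => c | inr b => w b end.

Section CompleteBipartiteNotSolvable.

Variables m n q : nat.
Hypothesis q_large : m.+2 <= q.

Variable f : (('I_m + 'I_n)%type -> 'I_q) -> ('I_m + 'I_n)%type -> 'I_q.
Hypothesis f_local : is_Dfunction (@Kmn_arc m n) f.

Local Notation config := (@split_config m n q).

Definition small_value (k : 'I_m.+1) : 'I_q := widen_ord (ltnW q_large) k.

Lemma small_value_inj : injective small_value.
Proof. by move=> k l /(congr1 val) /= /val_inj. Qed.

Lemma left_coord_indep c c' w a :
  f (config c w) (inl a) = f (config c' w) (inl a).
Proof. by apply: f_local => -[]. Qed.

Lemma right_coord_indep c w w' b :
  f (config c w) (inr b) = f (config c w') (inr b).
Proof. by apply: f_local => -[]. Qed.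

Lemma right_assignment_avoided :
  exists w : 'I_n -> 'I_q,
    forall b k w', f (config (small_value k) w') (inr b) != w b.
Proof.
pose w0 : 'I_n -> 'I_q := fun=> small_value ord0.
have avoid_at b : exists y : 'I_q,
    y \notin [seq f (config (small_value k) w0) (inr b) | k <- enum 'I_m.+1].
  apply: (@exists_image_notin _ _ id) => //.
  by rewrite size_map size_enum_ord card_ord.
have [w w_avoid] := fin_all_exists avoid_at.
exists w => b k w'; rewrite (right_coord_indep _ _ w0).
by apply: contra (w_avoid b) => /eqP <-; apply: map_f; rewrite mem_enum.
Qed.

Lemma left_constant_avoided w :
  exists k, forall a, f (config (small_value k) w) (inl a) != small_value k.
Proof.
pose left_values := [seq f (config (small_value ord0) w) (inl a) | a <- enum 'I_m].
have [k k_avoid] : exists k, small_value k \notin left_values.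
  apply: exists_image_notin small_value_inj _.
  by rewrite size_map size_enum_ord card_ord.
exists k => a; rewrite (left_coord_indep _ (small_value ord0)).
by apply: contra k_avoid => /eqP <-; apply: map_f; rewrite mem_enum.
Qed.

Lemma config_without_fixed_coord : exists x, forall v, f x v != x v.
Proof.
have [w w_avoid] := right_assignment_avoided.
have [k k_avoid] := left_constant_avoided w.
by exists (config (small_value k) w) => -[a | b] /=.
Qed.

End CompleteBipartiteNotSolvable.

Lemma Kmn_not_solvable (m n q : nat) :
  m.+2 <= q -> ~ solvable (@Kmn_arc m n) q.
Proof.
move=> q_large [f [f_local has_fixed]].
have [x no_fixed] := @config_without_fixed_coord m n q q_large f f_local.
have [v fixed_v] := has_fixed x.
by move: (no_fixed v); rewrite fixed_v eqxx.
Qed.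

Theorem corollary11 (m n : nat) (hm : 0 < m) (hn : 0 < n) :
  ~ solvable (@Kmn_arc m n) m.+2.
Proof. exact: Kmn_not_solvable. Qed.
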